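(* For any quantum automaton $\mathcal{A}=(\mathcal{H},|s_0\rangle,\Sigma,\{U_\sigma\},F)$ and any $w\in\Sigma^\omega$, $f^{\mathrm{ND}}_{\mathcal{A}}(w)=f^{\mathrm{IR}}_{\mathcal{A}}(w)$.
   Context: A quantum automaton is a tuple $\mathcal{A}=(\mathcal{H},|s_0\rangle,\Sigma,\{U_\sigma:\sigma\in\Sigma\},F)$ where $\mathcal{H}$ is a finite-dimensional complex Hilbert space, $|s_0\rangle$ a unit vector, $\Sigma$ a finite alphabet, each $U_\sigma$ unitary, and $F$ a subspace with orthogonal projection $P_F$. For $w=\sigma_1\sigma_2\cdots\in\Sigma^\omega$ the non-disturbing run is $|s_n\rangle=U_{\sigma_n}\cdots U_{\sigma_1}|s_0\rangle$. Define $$f^{\mathrm{ND}}_{\mathcal{A}}(w)=\sup_{|\psi\rangle\in F,\||\psi\rangle\|=1}\sup_{\{n_i\}}\inf_{i\ge1}|\langle\psi|s_{n_i}\rangle|^2,\qquad f^{\mathrm{IR}}_{\mathcal{A}}(w)=\sup_{\{n_i\}}\inf_{i\ge1}\|P_F|s_{n_i}\rangle\|^2,$$ where $\{n_i\}$ ranges over strictly increasing sequences $0\le n_1<n_2<\cdots$ of natural numbers. *)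

From HB Require Import structures.
From mathcomp Require Import all_boot all_order all_algebra.
From mathcomp Require Import classical_sets reals.
From mathcomp Require Import complex.
Set Implicit Arguments. Unset Strict Implicit. Unset Printing Implicit Defensive.
Import Order.TTheory GRing.Theory Num.Theory.
Local Open Scope ring_scope.

Section QA.
Variable R : realType.
Local Notation C := R[i].

Definition cabs2 (z : C) : R := complex.Re z ^+ 2 + complex.Im z ^+ 2.

Definition ctr m n (A : 'M[C]_(m, n)) : 'M[C]_(n, m) := (map_mx Num.conj A)^T.

Definition cinner n (u v : 'cV[C]_n) : C := (ctr u *m v) 0 0.

Definition vnorm2 n (v : 'cV[C]_n) : R := \sum_(i < n) cabs2 (v i 0).

Definition unitary n (U : 'M[C]_n) : Prop := U *m ctr U = 1%:M /\ ctr U *m U = 1%:M.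

(* psi (a column vector) lies in the subspace F, the subspace being the
   row space of the matrix F (as in mxalgebra) *)
Definition in_subspace n (F : 'M[C]_n) (psi : 'cV[C]_n) : bool := (psi^T <= F)%MS.

(* P is the orthogonal projection onto F: idempotent, self-adjoint,
   and its range (column space) equals F *)
Definition orth_proj_onto n (F P : 'M[C]_n) : Prop :=
  P *m P = P /\ ctr P = P /\ (P^T == F)%MS.

(* non-disturbing run: s_0 = s0, s_{k+1} = U_{sigma_{k+1}} s_k, where the
   infinite word w = sigma_1 sigma_2 ... is encoded as w : nat -> Sigma with
   sigma_{k+1} = w k *)
Fixpoint run n (Sigma : Type) (s0 : 'cV[C]_n) (U : Sigma -> 'M[C]_n)
  (w : nat -> Sigma) (k : nat) : 'cV[C]_n :=
  match k with
  | 0 => s0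
  | k'.+1 => U (w k') *m run s0 U w k'
  end.

Definition strictly_increasing (ns : nat -> nat) : Prop :=
  forall i, (ns i < ns i.+1)%N.

(* inf over i >= 1 of a sequence (here indexed from 0) *)
Definition inf_seq (a : nat -> R) : R := inf [set x | exists i, x = a i].

Definition f_ND n (Sigma : Type) (s0 : 'cV[C]_n) (U : Sigma -> 'M[C]_n)
  (F : 'M[C]_n) (w : nat -> Sigma) : R :=
  sup [set x | exists psi : 'cV[C]_n,
         [/\ in_subspace F psi, vnorm2 psi = 1 &
           exists ns, strictly_increasing ns /\
             x = inf_seq (fun i => cabs2 (cinner psi (run s0 U w (ns i))))]].

Definition f_IR n (Sigma : Type) (s0 : 'cV[C]_n) (U : Sigma -> 'M[C]_n)
  (P : 'M[C]_n) (w : nat -> Sigma) : R :=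
  sup [set x | exists ns, strictly_increasing ns /\
         x = inf_seq (fun i => vnorm2 (P *m run s0 U w (ns i)))].

End QA.

From HB Require Import structures.
From mathcomp Require Import all_boot all_order all_algebra.
From mathcomp Require Import classical_sets reals complex.
From mathcomp Require Import lra.
From mathcomp Require Import all_classical all_reals all_analysis.
Import Order.TTheory GRing.Theory Num.Theory.
Import numFieldNormedType.Exports.
Set Implicit Arguments. Unset Strict Implicit. Unset Printing Implicit Defensive.
Local Open Scope ring_scope.
Local Open Scope classical_set_scope.

(* For a unit vector psi in F we have <psi|s> = <psi|P s>, so by Cauchy-Schwarz
   |<psi|s>|^2 <= ||P s||^2, whence f_ND <= f_IR.  Conversely, suppose
   ||P s_(n_i)||^2 >= y > 0 for all i.  The vectors P s_(n_i) lie in the unit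
   ball of F, which is compact, so along a further subsequence they converge to
   some x in F with ||x||^2 >= y.  For psi = x / ||x|| the overlaps
   |<psi|s_(n_i)>|^2 = |<psi|P s_(n_i)>|^2 tend to |<psi|x>|^2 = ||x||^2, hence are
   eventually at least y - e; so f_ND >= y - e for every e > 0. *)

Section InnerProduct.
Variables (R : realType) (n : nat).
Local Notation C := R[i].
Implicit Types (z : C) (u v t psi : 'cV[C]_n).

Lemma cabs2E z : (cabs2 z)%:C%C = z^* * z.
Proof. by rewrite add_Re2_Im2 normCK mulrC. Qed.

Lemma cabs2_ge0 z : 0 <= cabs2 z.
Proof. by rewrite addr_ge0 ?sqr_ge0. Qed.

Lemma ctrK m k (A : 'M[C]_(m, k)) : ctr (ctr A) = A.
Proof. by apply/matrixP => i j; rewrite !mxE conjCK. Qed.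

Lemma ctr_mul m k l (A : 'M[C]_(m, k)) (B : 'M[C]_(k, l)) :
  ctr (A *m B) = ctr B *m ctr A.
Proof. by rewrite /ctr map_mxM trmx_mul. Qed.

Lemma cinnerE u v : cinner u v = \sum_i (u i 0)^* * v i 0.
Proof. by rewrite /cinner !mxE; apply: eq_bigr => i _; rewrite !mxE. Qed.

Lemma cinner_adjr u (A : 'M[C]_n) v : cinner u (A *m v) = cinner (ctr A *m u) v.
Proof. by rewrite /cinner ctr_mul ctrK mulmxA. Qed.

Lemma cinnerDr u v t : cinner u (v + t) = cinner u v + cinner u t.
Proof. by rewrite /cinner mulmxDr mxE. Qed.

Lemma cinnerBr u v t : cinner u (v - t) = cinner u v - cinner u t.
Proof. by rewrite /cinner mulmxBr !mxE. Qed.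

Lemma cinnerZr u z v : cinner u (z *: v) = z * cinner u v.
Proof. by rewrite /cinner -scalemxAr mxE. Qed.

Lemma cinnerC u v : cinner v u = (cinner u v)^*.
Proof.
by rewrite !cinnerE rmorph_sum; apply: eq_bigr => i _; rewrite rmorphM /= conjCK mulrC.
Qed.

Lemma cinnerDl u v t : cinner (u + v) t = cinner u t + cinner v t.
Proof. by rewrite cinnerC cinnerDr rmorphD /= -!cinnerC. Qed.

Lemma cinnerZl z u v : cinner (z *: u) v = z^* * cinner u v.
Proof. by rewrite cinnerC cinnerZr rmorphM /= -cinnerC. Qed.

Lemma vnorm2E v : (vnorm2 v)%:C%C = cinner v v.
Proof. by rewrite cinnerE rmorph_sum; apply: eq_bigr => i _; rewrite -cabs2E. Qed.

Lemma vnorm2_ge0 v : 0 <= vnorm2 v.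
Proof. by rewrite sumr_ge0 // => i _; apply: cabs2_ge0. Qed.

Lemma cabs2_le_vnorm2 v j : cabs2 (v j 0) <= vnorm2 v.
Proof. by rewrite /vnorm2 (bigD1 j) //= lerDl sumr_ge0 // => i _; apply: cabs2_ge0. Qed.

Lemma vnorm2D_orth u v : cinner u v = 0 -> vnorm2 (u + v) = vnorm2 u + vnorm2 v.
Proof.
move=> uv0; apply: complexI; rewrite rmorphD /= !vnorm2E cinnerDl !cinnerDr uv0.
by rewrite (cinnerC u v) uv0 conjC0 addr0 add0r.
Qed.

Lemma vnorm2Z z v : vnorm2 (z *: v) = cabs2 z * vnorm2 v.
Proof. by apply: complexI; rewrite rmorphM /= !vnorm2E cinnerZl cinnerZr mulrA cabs2E. Qed.

Lemma unitary_vnorm2 (A : 'M[C]_n) v : unitary A -> vnorm2 (A *m v) = vnorm2 v.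
Proof. by case=> _ AA1; apply: complexI; rewrite !vnorm2E cinner_adjr mulmxA AA1 mul1mx. Qed.

(* Split t into its component along psi and an orthogonal remainder. *)
Lemma cabs2_cinner_le psi t : vnorm2 psi = 1 -> cabs2 (cinner psi t) <= vnorm2 t.
Proof.
move=> psi1; set c := cinner psi t.
have orth : cinner psi (t - c *: psi) = 0.
  by rewrite cinnerBr cinnerZr -vnorm2E psi1 mulr1 subrr.
rewrite -(subrK (c *: psi) t) addrC vnorm2D_orth; last by rewrite cinnerZl orth mulr0.
by rewrite vnorm2Z psi1 mulr1 lerDl vnorm2_ge0.
Qed.

Section OrthogonalProjection.
Variable P : 'M[C]_n.
Hypotheses (PP : P *m P = P) (P_selfadj : ctr P = P).

Lemma vnorm2_proj_le v : vnorm2 (P *m v) <= vnorm2 v.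
Proof.
have orth : cinner (P *m v) (v - P *m v) = 0.
  by rewrite cinnerBr cinner_adjr P_selfadj mulmxA PP subrr.
by rewrite -{2}(subrK (P *m v) v) addrC vnorm2D_orth // lerDl vnorm2_ge0.
Qed.

Lemma cinner_projr psi v : P *m psi = psi -> cinner psi (P *m v) = cinner psi v.
Proof. by move=> Ppsi; rewrite cinner_adjr P_selfadj Ppsi. Qed.

Lemma in_subspaceP (F : 'M[C]_n) psi :
  (P^T == F)%MS -> in_subspace F psi <-> P *m psi = psi.
Proof.
case/andP=> PF FP; split.
  move=> /submx_trans /(_ FP) /submxP [D psiD].
  by rewrite -[psi]trmxK psiD trmx_mul trmxK mulmxA PP.
by move=> <-; rewrite /in_subspace trmx_mul (submx_trans (submxMl _ _) PF).
Qed.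

End OrthogonalProjection.
End InnerProduct.

Lemma strictly_increasing_homo (phi : nat -> nat) :
  strictly_increasing phi -> {homo phi : i j / (i < j)%N}.
Proof. exact: homo_ltn ltn_trans. Qed.

Lemma strictly_increasing_comp (phi psi : nat -> nat) :
  strictly_increasing phi -> strictly_increasing psi -> strictly_increasing (phi \o psi).
Proof. by move=> /strictly_increasing_homo phi_lt psi_lt i; apply: phi_lt. Qed.

Lemma strictly_increasing_ge (phi : nat -> nat) :
  strictly_increasing phi -> forall i, (i <= phi i)%N.
Proof. by move=> phi_lt; elim=> // i /leq_ltn_trans; apply. Qed.

Lemma near_infty_strictly_increasing (Q : nat -> Prop) :
  (\forall m \near \oo, Q m) -> exists2 phi, strictly_increasing phi & forall i, Q (phi i).
Proof.
case=> M _ QM; exists (addn^~ M) => i; first by rewrite addSn.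
by apply: QM; rewrite /= leq_addl.
Qed.

Lemma cvg_subseq (T : topologicalType) (u : nat -> T) (l : T) (phi : nat -> nat) :
  strictly_increasing phi -> u @ \oo --> l -> u \o phi @ \oo --> l.
Proof.
move=> phi_lt ul; apply: cvg_comp ul; apply/cvgnyPge => M.
by near=> i; apply: leq_trans (strictly_increasing_ge phi_lt i); near: i; apply: nbhs_infty_ge.
Unshelve. all: end_near.
Qed.

Section FiniteBolzanoWeierstrass.
Variable R : realType.

Lemma bolzano_weierstrass_fin (I : finType) (a : I -> nat -> R) (M : R) :
  (forall i m, `|a i m| <= M) ->
  exists2 phi, strictly_increasing phi & forall i, cvgn (a i \o phi).
Proof.
move=> aM.
suff [phi phi_lt cvg_a] : exists2 phi, strictly_increasing phi &
    forall i, i \in enum I -> cvgn (a i \o phi).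
  by exists phi => // i; apply: cvg_a; rewrite mem_enum.
elim: (enum I) => [|i s [phi phi_lt cvg_a]]; first by exists id.
have bounded_ai : bounded_fun (a i \o phi).
  exists M; split; first by rewrite num_real.
  by move=> N MN m _; apply: le_trans (aM _ _) (ltW MN).
have [psi /increasing_seqP psi_lt cvg_ai] := bolzano_weierstrass bounded_ai.
exists (phi \o psi); first exact: strictly_increasing_comp.
move=> j; rewrite inE => /predU1P [-> //|js].
by apply/cvg_ex; exists (limn (a j \o phi)); apply: cvg_subseq (cvg_a j js).
Qed.

End FiniteBolzanoWeierstrass.

Section CoordinateConvergence.
Variable R : realType.
Local Notation C := R[i].
Local Notation Re := complex.Re.
Local Notation Im := complex.Im.

Lemma ReD : {morph @Re R : x y / x + y}. Proof. by case=> [? ?] [? ?]. Qed.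
Lemma ImD : {morph @Im R : x y / x + y}. Proof. by case=> [? ?] [? ?]. Qed.
Lemma ReM (a w : C) : Re (a * w) = Re a * Re w - Im a * Im w.
Proof. by case: a w => [? ?] [? ?]. Qed.
Lemma ImM (a w : C) : Im (a * w) = Re a * Im w + Im a * Re w.
Proof. by case: a w => [? ?] [? ?]. Qed.

(* Convergence in C is expressed through real and imaginary parts, so that
   only real analysis (Bolzano-Weierstrass on R) is needed. *)
Definition cvg_reim (z : nat -> C) (c : C) : Prop :=
  (fun m => Re (z m)) @ \oo --> Re c /\ (fun m => Im (z m)) @ \oo --> Im c.

Lemma cvg_reim_uniq z a b : cvg_reim z a -> cvg_reim z b -> a = b.
Proof.
case: a b => [a1 a2] [b1 b2] [za1 za2] [zb1 zb2].
have /= -> := norm_cvg_unique za1 zb1.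
by have /= -> := norm_cvg_unique za2 zb2.
Qed.

Lemma cvg_reimMl (a : C) z c : cvg_reim z c -> cvg_reim (fun m => a * z m) (a * c).
Proof.
case=> zc1 zc2; split; under eq_cvg do rewrite ?ReM ?ImM; rewrite ?ReM ?ImM.
  by apply: cvgB; apply: cvgM => //; exact: cvg_cst.
by apply: cvgD; apply: cvgM => //; exact: cvg_cst.
Qed.

Lemma cvg_reim_sum k (z : 'I_k -> nat -> C) (c : 'I_k -> C) :
  (forall i, cvg_reim (z i) (c i)) -> cvg_reim (fun m => \sum_i z i m) (\sum_i c i).
Proof.
move=> zc; split.
- rewrite (big_morph _ ReD (erefl _)); under eq_cvg do rewrite (big_morph _ ReD (erefl _)).
  by apply: cvg_big => [|i _]; [exact: add_continuous | case: (zc i)].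
- rewrite (big_morph _ ImD (erefl _)); under eq_cvg do rewrite (big_morph _ ImD (erefl _)).
  by apply: cvg_big => [|i _]; [exact: add_continuous | case: (zc i)].
Qed.

Lemma cvg_reim_cabs2 z c : cvg_reim z c -> (fun m => cabs2 (z m)) @ \oo --> cabs2 c.
Proof.
case=> zc1 zc2; rewrite /cabs2 !expr2.
by under eq_cvg do rewrite /= !expr2; apply: cvgD; apply: cvgM.
Qed.

Definition cvg_coord k (x : nat -> 'cV[C]_k) (l : 'cV[C]_k) : Prop :=
  forall j, cvg_reim (fun m => x m j 0) (l j 0).

Variable n : nat.
Implicit Types (x : nat -> 'cV[C]_n) (l : 'cV[C]_n).

Lemma cvg_coord_uniq x l1 l2 : cvg_coord x l1 -> cvg_coord x l2 -> l1 = l2.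
Proof.
by move=> xl1 xl2; apply/matrixP => j k; rewrite (ord1 k); apply: cvg_reim_uniq (xl1 j) (xl2 j).
Qed.

Lemma cvg_coord_mulmx k (A : 'M[C]_(k, n)) x l :
  cvg_coord x l -> cvg_coord (fun m => A *m x m) (A *m l).
Proof.
move=> xl j; rewrite mxE.
have -> : (fun m => (A *m x m) j 0) = (fun m => \sum_i A j i * x m i 0).
  by apply/funext => m; rewrite mxE.
by apply: cvg_reim_sum => i; apply: cvg_reimMl.
Qed.

Lemma cvg_coord_cinner u x l :
  cvg_coord x l -> cvg_reim (fun m => cinner u (x m)) (cinner u l).
Proof. by move=> xl; apply: (cvg_coord_mulmx (ctr u) xl). Qed.

Lemma cvg_coord_vnorm2 x l : cvg_coord x l -> (fun m => vnorm2 (x m)) @ \oo --> vnorm2 l.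
Proof.
move=> xl; apply: cvg_big => [|j _]; first exact: add_continuous.
exact: cvg_reim_cabs2.
Qed.

Lemma bounded_cvg_coord_subseq x (M : R) : (forall m, vnorm2 (x m) <= M) ->
  exists2 phi, strictly_increasing phi & exists l, cvg_coord (x \o phi) l.
Proof.
move=> xM.
pose a (jb : 'I_n * bool) m := if jb.2 then Re (x m jb.1 0) else Im (x m jb.1 0).
have aM jb m : `|a jb m| <= 1 + M.
  have := le_trans (cabs2_le_vnorm2 (x m) jb.1) (xM m); rewrite /a /cabs2.
  by case: jb.2; move: (Re _) (Im _) => p q pqM; rewrite ler_norml; apply/andP; split; nra.
have [phi phi_lt cvg_a] := bolzano_weierstrass_fin aM.
exists phi => //; exists (\col_j Complex (limn (a (j, true) \o phi)) (limn (a (j, false) \o phi))).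
by move=> j; rewrite mxE; split; [exact: (cvg_a (j, true)) | exact: (cvg_a (j, false))].
Qed.

End CoordinateConvergence.

Section UnitWitness.
Variables (R : realType) (n : nat).
Local Notation C := R[i].
Implicit Types (v : 'cV[C]_n).

Definition normalize v : 'cV[C]_n := ((Num.sqrt (vnorm2 v))^-1)%:C%C *: v.

Lemma cabs2_real (r : R) : cabs2 r%:C%C = r ^+ 2.
Proof. by rewrite /cabs2 /= expr0n addr0. Qed.

Lemma conjC_real_complex (r : R) : (r%:C%C)^* = r%:C%C.
Proof. exact: conjc_real. Qed.

Lemma vnorm2_normalize v : 0 < vnorm2 v -> vnorm2 (normalize v) = 1.
Proof.
by move=> v0; rewrite vnorm2Z cabs2_real exprVn sqr_sqrtr ?ltW // mulVf ?gt_eqF.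
Qed.

Lemma cabs2_cinner_normalize v : 0 < vnorm2 v -> cabs2 (cinner (normalize v) v) = vnorm2 v.
Proof.
move=> v0; rewrite cinnerZl -vnorm2E conjC_real_complex -rmorphM cabs2_real exprMn exprVn.
by rewrite sqr_sqrtr ?ltW // expr2 mulrA mulVf ?mul1r ?gt_eqF.
Qed.

Variable P : 'M[C]_n.

Lemma exists_unit_subseq_witness (v : nat -> 'cV[C]_n) (y e : R) :
  0 < y -> 0 < e -> (forall m, P *m v m = v m) -> (forall m, y <= vnorm2 (v m) <= 1) ->
  exists2 psi, P *m psi = psi /\ vnorm2 psi = 1 &
    exists2 phi, strictly_increasing phi &
      forall i, y - e <= cabs2 (cinner psi (v (phi i))).
Proof.
move=> y0 e0 Pv vy.
have [phi phi_lt [l vl]] : exists2 phi, strictly_increasing phi &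
    exists l, cvg_coord (v \o phi) l.
  by apply: (@bounded_cvg_coord_subseq _ _ _ 1) => m; case/andP: (vy m).
have Pl : P *m l = l.
  apply: (cvg_coord_uniq _ vl).
  have -> : v \o phi = (fun m => P *m (v \o phi) m) by apply/funext => m; rewrite /= Pv.
  exact: cvg_coord_mulmx.
have yl : y <= vnorm2 l.
  apply: cvgr_to_ge (cvg_coord_vnorm2 vl) _.
  by apply: nearW => m; case/andP: (vy (phi m)).
have l0 : 0 < vnorm2 l by apply: lt_le_trans yl.
have corr : (fun m => cabs2 (cinner (normalize l) ((v \o phi) m))) @ \oo --> vnorm2 l.
  by rewrite -(cabs2_cinner_normalize l0); apply/cvg_reim_cabs2/cvg_coord_cinner.
have yel : y - e < vnorm2 l by lra.
have [phi' phi'_lt corr_ge] := near_infty_strictly_increasing (cvgr_ge _ corr _ yel).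
exists (normalize l); first by rewrite /normalize -scalemxAr Pl vnorm2_normalize.
exists (phi \o phi'); first exact: strictly_increasing_comp.
exact: corr_ge.
Qed.

End UnitWitness.

Section SupInf.
Variable R : realType.

Lemma inf_seq_le (a : nat -> R) i : (forall j, 0 <= a j) -> inf_seq a <= a i.
Proof. by move=> a_ge0; apply: ge_inf; [exists 0 => _ [j ->] | exists i]. Qed.

Lemma le_inf_seq (a : nat -> R) x : (forall i, x <= a i) -> x <= inf_seq a.
Proof. by move=> xa; apply: lb_le_inf => [|_ [j ->]]; [exists (a 0), 0 | ]. Qed.

Lemma sup_ge0 (A : set R) : (forall x, A x -> 0 <= x) -> 0 <= sup A.
Proof.
move=> A_ge0; have [supA|/sup_out -> //] := pselect (has_sup A).
by have [x Ax] := supA.1; apply: le_trans (A_ge0 x Ax) (sup_upper_bound supA Ax).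
Qed.

End SupInf.

Section Automaton.
Variables (R : realType) (n : nat) (Sigma : Type).
Variables (s0 : 'cV[R[i]]_n) (U : Sigma -> 'M[R[i]]_n) (F P : 'M[R[i]]_n).
Variable w : nat -> Sigma.
Hypotheses (s0_unit : vnorm2 s0 = 1) (U_unitary : forall sigma, unitary (U sigma)).
Hypotheses (PP : P *m P = P) (P_selfadj : ctr P = P) (PF : (P^T == F)%MS).
Local Notation s := (run s0 U w).

Lemma vnorm2_run m : vnorm2 (s m) = 1.
Proof. by elim: m => //= m IHm; rewrite unitary_vnorm2. Qed.

Lemma vnorm2_proj_run_le1 m : vnorm2 (P *m s m) <= 1.
Proof. by rewrite -(vnorm2_run m) vnorm2_proj_le. Qed.

Lemma cabs2_cinner_run_le psi m : in_subspace F psi -> vnorm2 psi = 1 ->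
  cabs2 (cinner psi (s m)) <= vnorm2 (P *m s m).
Proof.
move=> /(in_subspaceP PP _ PF) Ppsi psi1.
by rewrite -(cinner_projr P_selfadj _ Ppsi) cabs2_cinner_le.
Qed.

Lemma f_ND_le_f_IR : f_ND s0 U F w <= f_IR s0 U P w.
Proof.
rewrite /f_ND /f_IR; set A := (X in sup X <= _); set B := (X in _ <= sup X).
have B_ge0 x : B x -> 0 <= x.
  by case=> ns [_ ->]; apply: le_inf_seq => i; apply: vnorm2_ge0.
have [A0|A0] := pselect (A !=set0); last by rewrite sup_out; [apply: sup_ge0 | case].
apply: sup_le => //.
  move=> _ [psi [psiF psi1 [ns [ns_lt ->]]]]; apply/downP.
  exists (inf_seq (fun i => vnorm2 (P *m s (ns i)))); first by exists ns.
  apply: le_inf_seq => i; apply: le_trans (inf_seq_le i _) (cabs2_cinner_run_le _ psiF psi1) => j.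
  exact: cabs2_ge0.
split.
  by exists (inf_seq (fun i => vnorm2 (P *m s i))); exists id; split => // i; apply: ltnSn.
exists 1 => _ [ns [_ ->]]; apply: le_trans (inf_seq_le 0 _) (vnorm2_proj_run_le1 _) => j.
exact: vnorm2_ge0.
Qed.

Lemma f_IR_le_f_ND : f_IR s0 U P w <= f_ND s0 U F w.
Proof.
rewrite /f_ND /f_IR; set A := (X in _ <= sup X).
have A_ge0 x : A x -> 0 <= x.
  by case=> psi [_ _ [ns [_ ->]]]; apply: le_inf_seq => i; apply: cabs2_ge0.
have A_le1 x : A x -> x <= 1.
  case=> psi [psiF psi1 [ns [_ ->]]]; apply: le_trans (inf_seq_le 0 _) _ => [j|].
    exact: cabs2_ge0.
  exact: le_trans (cabs2_cinner_run_le _ psiF psi1) (vnorm2_proj_run_le1 _).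
apply: ge_sup.
  by exists (inf_seq (fun i => vnorm2 (P *m s i))); exists id; split => // i; apply: ltnSn.
move=> _ [ns [ns_lt ->]]; set y := inf_seq _.
have [y0|y0] := lerP y 0; first exact: le_trans y0 (sup_ge0 A_ge0).
apply/ler_addgt0Pr => e e0.
have Pv m : P *m (P *m s (ns m)) = P *m s (ns m) by rewrite mulmxA PP.
have yv m : y <= vnorm2 (P *m s (ns m)) <= 1.
  by rewrite inf_seq_le ?vnorm2_proj_run_le1 // => j; apply: vnorm2_ge0.
have [psi [Ppsi psi1] [phi phi_lt corr]] := exists_unit_subseq_witness y0 e0 Pv yv.
set z := inf_seq (fun i => cabs2 (cinner psi (s (ns (phi i))))).
have Az : A z.
  exists psi; split => //; first exact/(in_subspaceP PP _ PF).
  by exists (ns \o phi); split => //; apply: strictly_increasing_comp.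
have yz : y - e <= z.
  by apply: le_inf_seq => i; rewrite -(cinner_projr P_selfadj _ Ppsi); apply: corr.
have supA : has_sup A by split; [exists z | exists 1 => x /A_le1].
by have := sup_upper_bound supA Az; lra.
Qed.

End Automaton.

Theorem proposition1 (R : realType) (n : nat) (Sigma : finType)
  (s0 : 'cV[R[i]]_n) (U : Sigma -> 'M[R[i]]_n) (F P : 'M[R[i]]_n)
  (w : nat -> Sigma) :
  vnorm2 s0 = 1 ->
  (forall sigma, unitary (U sigma)) ->
  orth_proj_onto F P ->
  f_ND s0 U F w = f_IR s0 U P w.
Proof.
move=> s0_unit U_unitary [PP [P_selfadj PF]].
by apply/eqP; rewrite eq_le f_ND_le_f_IR ?f_IR_le_f_ND.
Qed.
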